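(* In the noiseless discrete channel setting described in the context, suppose Assumption A holds, and suppose that for some sequence of sample sizes $n=n_N$ it holds that $\lim_{N\to\infty}\mathrm P(Z_{N,\delta}>0)=0$ for all $\delta\in(0,2]$. Then $$\lim_{N\to\infty}\frac{H(\theta\mid Y^n,X^n)}{H(\theta)}=0.$$
   Context: Setting. For each $N\in\mathbb N$: $\Theta=\Theta_N$ is a finite subset of the unit sphere of $\mathbb R^N$ of cardinality $M=M_N$, with $M_N\to\infty$ and $\langle\theta,\theta'\rangle\ge 0$ for all $\theta,\theta'\in\Theta$; $P_\Theta$ is the uniform distribution on $\Theta$; $\mathcal D=\mathcal D_N$ is a distribution on $\mathbb R^{L}$; $g=g_N:\mathbb R^L\times\mathbb R^N\to\mathcal Y$ with $\mathcal Y$ finite of cardinality independent of $N$. One draws $\theta\sim P_\Theta$, independently $X_1,\dots,X_n$ i.i.d. from $\mathcal D$, and sets $Y_i=g(X_i,\theta)$; $Y^n=(Y_i)_{i\le n}$, $X^n=(X_i)_{i\le n}$. $H$ denotes Shannon entropy (natural log), so $H(\theta)=\log M$. For $\delta\in[0,2]$, $Z_{N,\delta}$ is the number of $\theta'\in\Theta$ with $Y_i=g(X_i,\theta')$ for all $i\le n$ and $\|\theta-\theta'\|^2\ge\delta$. Assumption A: for $\theta,\theta'$ independent draws from $P_\Theta$, $\lim_{\delta\to0^+}\lim_{N\to\infty}\frac{\log\left(M\,P_\Theta^{\otimes2}(\langle\theta,\theta'\rangle\ge 1-\delta)\right)}{\log M}=0$; and for any $\theta\in\Theta$, if $\theta'\sim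 P_\Theta$, then for every $\epsilon>0$, $\lim_N P_\Theta(\langle\theta',\theta\rangle\ge\epsilon)=0$. *)

From HB Require Import structures.
From mathcomp Require Import all_boot all_order all_algebra.
From mathcomp Require Import all_classical all_reals all_analysis.
Set Implicit Arguments. Unset Strict Implicit. Unset Printing Implicit Defensive.
Import Order.TTheory GRing.Theory Num.Theory.
Import numFieldNormedType.Exports.
Local Open Scope classical_set_scope.
Local Open Scope ring_scope.

Definition dotv {R : realType} {N : nat} (u v : 'rV[R]_N) : R :=
  \sum_(i < N) u ord0 i * v ord0 i.

Definition sqdist {R : realType} {N : nat} (u v : 'rV[R]_N) : R :=
  dotv (u - v) (u - v).

(* The observations Y^n = (g(X_i, theta))_{i<n} produced by parameter index t,
   for a sample x = X^n in (R^L)^n (R^L represented as L.-tuple R). *)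
Definition obs {R : realType} {Y : Type} {L N n M : nat}
  (Th : 'I_M -> 'rV[R]_N) (g : L.-tuple R -> 'rV[R]_N -> Y)
  (x : n.-tuple (L.-tuple R)) (t : 'I_M) : n.-tuple Y :=
  [tuple g (tnth x i) (Th t) | i < n].

(* Posterior probability P(theta = Th t | Y^n = y, X^n = x) under the uniform
   prior P_Theta on Theta = {Th t}, by Bayes' formula (noiseless channel:
   the likelihood of y given (x, theta') is the indicator [obs x theta' == y]). *)
Definition posterior {R : realType} {Y : eqType} {L N n M : nat}
  (Th : 'I_M -> 'rV[R]_N) (g : L.-tuple R -> 'rV[R]_N -> Y)
  (x : n.-tuple (L.-tuple R)) (y : n.-tuple Y) (t : 'I_M) : R :=
  ((M%:R)^-1 * (obs Th g x t == y)%:R) /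
  (\sum_(t' < M) (M%:R)^-1 * (obs Th g x t' == y)%:R).

(* Conditional entropy H(theta | Y^n, X^n) (natural log), where theta ~ P_Theta
   is independent of X^n ~ Q and Y^n = obs X^n theta:
   H = E[ - ln P(theta | Y^n, X^n) ]. *)
Definition cond_entropy {R : realType} {Y : eqType} {L N n M : nat}
  (Th : 'I_M -> 'rV[R]_N) (g : L.-tuple R -> 'rV[R]_N -> Y)
  (Q : probability (n.-tuple (L.-tuple R)) R) : \bar R :=
  (\sum_(t < M) ((M%:R)^-1)%:E *
     \int[Q]_x (- ln (posterior Th g x (obs Th g x t) t))%:E)%E.

(* Z_{N,delta}(theta = Th t, X^n = x): number of theta' in Theta consistent with
   all the observations and with ||theta - theta'||^2 >= delta. *)
Definition Zcount {R : realType} {Y : eqType} {L N n M : nat}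
  (Th : 'I_M -> 'rV[R]_N) (g : L.-tuple R -> 'rV[R]_N -> Y)
  (delta : R) (x : n.-tuple (L.-tuple R)) (t : 'I_M) : nat :=
  #|[set t' : 'I_M | (obs Th g x t' == obs Th g x t)
                     && (delta <= sqdist (Th t) (Th t'))]|.

(* P(Z_{N,delta} > 0) under the joint law of (theta, X^n) = P_Theta (x) Q. *)
Definition probZpos {R : realType} {Y : eqType} {L N n M : nat}
  (Th : 'I_M -> 'rV[R]_N) (g : L.-tuple R -> 'rV[R]_N -> Y)
  (Q : probability (n.-tuple (L.-tuple R)) R) (delta : R) : \bar R :=
  (\sum_(t < M) ((M%:R)^-1)%:E *
     Q [set x | (0 < Zcount Th g delta x t)%N])%E.

(* Q is the law of X^n = (X_1,...,X_n) with X_i i.i.d. ~ D, i.e. Q = D^{(x) n}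
   (characterized on measurable rectangles). *)
Definition iid_law {R : realType} {L n : nat}
  (D : probability (L.-tuple R) R)
  (Q : probability (n.-tuple (L.-tuple R)) R) : Prop :=
  forall A : 'I_n -> set (L.-tuple R), (forall i, measurable (A i)) ->
    Q [set x | forall i, A i (tnth x i)] = (\prod_(i < n) D (A i))%E.

(* P_Theta^{(x)2}(<theta, theta'> >= 1 - delta) *)
Definition close_pair_prob {R : realType} {N M : nat}
  (Th : 'I_M -> 'rV[R]_N) (delta : R) : R :=
  (#|[set tt : 'I_M * 'I_M | 1 - delta <= dotv (Th tt.1) (Th tt.2)]|%:R)
  / (M%:R ^+ 2).

Definition assumptionA {R : realType} (M : nat -> nat)
  (Th : forall N, 'I_(M N) -> 'rV[R]_N) : Prop :=
  (exists2 delta0 : R, 0 < delta0 &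
     exists ell : R -> R,
       (forall delta, 0 < delta < delta0 ->
          (ln ((M N)%:R * close_pair_prob (Th N) delta) / ln (M N)%:R)
            @[N --> \oo] --> ell delta)
       /\ ell delta @[delta --> (0:R)^'+] --> (0 : R))
  /\
  (forall (s : forall N, 'I_(M N)) (eps : R), 0 < eps ->
     ((#|[set t' : 'I_(M N) | eps <= dotv (Th N t') (Th N (s N))]|%:R)
        / (M N)%:R) @[N --> \oo] --> (0 : R)).

From HB Require Import structures.
From mathcomp Require Import all_boot all_order all_algebra.
From mathcomp Require Import all_classical all_reals all_analysis.
From mathcomp Require Import measurable_realfun.
From mathcomp Require Import ring lra.
Set Implicit Arguments. Unset Strict Implicit. Unset Printing Implicit Defensive.
Import Order.TTheory GRing.Theory Num.Theory.
Import numFieldNormedType.Exports.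
Local Open Scope classical_set_scope.
Local Open Scope ring_scope.

(* Given theta = t and the sample x, the posterior is uniform on the K(x, t)
   parameters producing the same observations as t, so H(theta | Y^n, X^n) is the
   average of E[ln K]. If Z_{N,2d} = 0, these parameters all lie at squared
   distance < 2d from t; in any case K <= M. Hence H is at most the average of
   ln C_{2d}(t), with C_{2d}(t) the number of parameters 2d-close to t, plus
   ln M * P(Z_{N,2d} > 0). For unit vectors, ||t - t'||^2 < 2d means
   <t, t'> > 1 - d, so by concavity of ln the average of ln C_{2d} is at most
   ln (M * P(<theta, theta'> >= 1 - d)), which Assumption A makes o(ln M) as
   d -> 0, while P(Z_{N,2d} > 0) -> 0 by hypothesis. *)

Lemma in_set_bool (T : Type) (P : T -> bool) x : (x \in [set y | P y]) = P x.
Proof. by apply/idP/idP; rewrite in_setE. Qed.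

Lemma card_set_bool (T : finType) (P : pred T) : #|[set t | P t]| = #|P|.
Proof. by apply: eq_card => t; rewrite in_set_bool. Qed.

Lemma sum_card_sections (I J : finType) (P : I -> J -> bool) :
  (\sum_i #|[set j | P i j]| = #|[set p : I * J | P p.1 p.2]|)%N.
Proof.
under eq_bigr do rewrite card_set_bool -sum1_card.
rewrite pair_big_dep card_set_bool -sum1_card; apply: eq_bigl => p.
by rewrite unfold_in.
Qed.

Section FiniteQuantifiers.
Context d (T : measurableType d) (I : finType) (P : I -> set T).
Hypothesis mP : forall i, measurable (P i).

Lemma measurable_forall : measurable [set x | forall i, P i x].
Proof.
have -> : [set x | forall i, P i x] = \bigcap_(i in [set: I]) P i.
  by apply/seteqP; split => x /= H i; [move=> _|]; apply: H.
by apply: fin_bigcap_measurable => //; exact: finite_finset.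
Qed.

Lemma measurable_exists : measurable [set x | exists i, P i x].
Proof.
have -> : [set x | exists i, P i x] = \bigcup_(i in [set: I]) P i.
  by apply/seteqP; split => x /= [i H]; exists i.
by apply: fin_bigcup_measurable => //; exact: finite_finset.
Qed.

End FiniteQuantifiers.

Lemma ge0_fine_le (R : realType) (x : \bar R) (b : R) :
  (0 <= x)%E -> (x <= b%:E)%E -> fine x <= b.
Proof. by case: x => [r| |] //=; rewrite lee_fin. Qed.

Lemma sqdist_dotv (R : realType) (N : nat) (u v : 'rV[R]_N) :
  sqdist u v = dotv u u + dotv v v - 2 * dotv u v.
Proof.
rewrite /sqdist /dotv mulr_sumr -big_split -sumrB /=; apply: eq_bigr => i _.
by rewrite !mxE; ring.
Qed.

Lemma sumr_gt0 (R : numDomainType) (I : finType) (c : I -> R) :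
  (0 < #|I|)%N -> (forall i, 0 < c i) -> 0 < \sum_i c i.
Proof.
case/card_gt0P => i0 _ c0; rewrite (bigD1 i0) //=.
by apply: ltr_pwDl => //; apply: sumr_ge0 => i _; exact: ltW.
Qed.

(* From ln y <= y - 1 at y = c i / mean. *)
Lemma mean_ln_le_ln_mean (R : realType) (I : finType) (c : I -> R) :
  (0 < #|I|)%N -> (forall i, 0 < c i) ->
  #|I|%:R^-1 * \sum_i ln (c i) <= ln (#|I|%:R^-1 * \sum_i c i).
Proof.
move=> I0 c0; have k0 : 0 < (#|I|%:R : R) by rewrite ltr0n.
set A := #|I|%:R^-1 * \sum_i c i.
have A0 : 0 < A by rewrite mulr_gt0 ?invr_gt0 ?sumr_gt0.
have ln_le i : ln (c i) <= ln A + (c i / A - 1).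
  have -> : ln (c i) = ln A + ln (c i / A).
    by rewrite -lnM ?posrE ?divr_gt0 // mulrC divfK ?lt0r_neq0.
  rewrite lerD2l; have := @le_ln1Dx R (c i / A - 1); rewrite [1 + _]addrC subrK; apply.
  by rewrite ltrBrDl addrN divr_gt0.
have sumA : \sum_i c i = #|I|%:R * A by rewrite /A mulrA mulfV ?mul1r ?lt0r_neq0.
rewrite -(ler_pM2l k0) mulrA mulfV ?mul1r ?lt0r_neq0 //.
apply: le_trans (ler_sum _ (fun i _ => ln_le i)) _.
rewrite big_split sumrB /= !sumr_const -mulr_suml sumA mulfK ?lt0r_neq0 //.
by rewrite subrr addr0 mulr_natl.
Qed.

Lemma ratio_cvg0_by_bounds (R : realType) (u w : R ^nat) (a p : R -> R ^nat)
    (ell : R -> R) (d0 : R) : 0 < d0 ->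
  (\forall N \near \oo, 0 < w N /\ 0 <= u N) ->
  (forall d, 0 < d < d0 -> \forall N \near \oo, u N <= a d N + w N * p d N) ->
  (forall d, 0 < d < d0 -> a d N / w N @[N --> \oo] --> ell d) ->
  (forall d, 0 < d < d0 -> p d N @[N --> \oo] --> 0) ->
  ell d @[d --> 0^'+] --> 0 ->
  u N / w N @[N --> \oo] --> 0.
Proof.
move=> d0_gt0 wu0 u_le a_cvg p_cvg ell_cvg.
apply/cvgrPdist_le => e e0; have e30 : 0 < e / 3 by rewrite divr_gt0.
have [d [d_gt0 d_lt ell_le]] : exists d, [/\ 0 < d, d < d0 & `|0 - ell d| <= e / 3].
  apply: (@filter_ex _ _ (at_right_proper_filter 0)); near=> d; split; near: d.
  - exact: nbhs_right_gt.
  - exact: nbhs_right_lt.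
  - exact: (cvgrPdist_le _ _).1 ell_cvg _ e30.
have dI : 0 < d < d0 by rewrite d_gt0.
near=> N.
have [w0 u0] : 0 < w N /\ 0 <= u N by near: N.
have ua : u N <= a d N + w N * p d N by near: N; exact: u_le.
have a_le : a d N <= 2 * (e / 3) * w N.
  rewrite -ler_pdivrMr //.
  have : `|ell d - a d N / w N| <= e / 3.
    by near: N; exact: (cvgrPdist_le _ _).1 (a_cvg d dI) _ e30.
  by move: ell_le; rewrite sub0r normrN => /ler_normlP [_ ?] /ler_normlP [? _]; lra.
have p_le : p d N * w N <= e / 3 * w N.
  rewrite ler_pM2r //.
  have : `|0 - p d N| <= e / 3.
    by near: N; exact: (cvgrPdist_le _ _).1 (p_cvg d dI) _ e30.
  by rewrite sub0r normrN => /ler_normlP [].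
rewrite sub0r normrN ger0_norm ?divr_ge0 ?(ltW w0) // ler_pdivrMr //.
nra.
Unshelve. all: by end_near.
Qed.

Section NoiselessChannel.
Variables (R : realType) (Y : finType) (L n M N : nat).
Variables (Th : 'I_M -> 'rV[R]_N) (g : L.-tuple R -> 'rV[R]_N -> Y).
Hypothesis measurable_g : forall t y, measurable [set x : L.-tuple R | g x (Th t) = y].

Local Notation sample := (n.-tuple (L.-tuple R)).

Definition consistent (t t' : 'I_M) : set sample :=
  [set x | obs Th g x t' = obs Th g x t].

Definition n_consistent (x : sample) (t : 'I_M) : nat :=
  #|[set t' | obs Th g x t' == obs Th g x t]|.

Definition n_close (d : R) (t : 'I_M) : nat := #|[set t' | sqdist (Th t) (Th t') < d]|.

Definition Zcount_pos (d : R) (t : 'I_M) : set sample :=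
  [set x | (0 < Zcount Th g d x t)%N].

Lemma measurable_consistent t t' : measurable (consistent t t').
Proof.
have -> : consistent t t' = [set x | forall i : 'I_n, exists y : Y,
    ((fun x : sample => tnth x i) @^-1`
       ([set z | g z (Th t') = y] `&` [set z | g z (Th t) = y])) x].
  apply/seteqP; split => x /=.
    move=> Ex i; exists (g (tnth x i) (Th t)); split => //.
    by move: (congr1 (fun u => tnth u i) Ex); rewrite !tnth_mktuple.
  move=> Ex; apply: eq_from_tnth => i; rewrite !tnth_mktuple.
  by have [y [-> ->]] := Ex i.
apply: measurable_forall => i; apply: measurable_exists => y.
rewrite -[X in measurable X]setTI; apply: measurable_tnth => //.
exact: measurableI.
Qed.

Lemma measurable_Zcount_pos d t : measurable (Zcount_pos d t).
Proof.
have -> : Zcount_pos d t = [set x | exists t',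
    (if d <= sqdist (Th t) (Th t') then consistent t t' else set0) x].
  apply/seteqP; split => x /=.
    case/card_gt0P => t'; rewrite in_set_bool => /andP [/eqP Ex le_d].
    by exists t'; rewrite le_d.
  case=> t'; case: ifP => // le_d Ex; apply/card_gt0P.
  by exists t'; rewrite in_set_bool le_d andbT; apply/eqP.
by apply: measurable_exists => t'; case: ifP => _ //; exact: measurable_consistent.
Qed.

Lemma n_consistent_gt0 x t : (0 < n_consistent x t)%N.
Proof. by apply/card_gt0P; exists t; rewrite in_set_bool. Qed.

Lemma n_consistent_sum x t :
  (n_consistent x t)%:R = \sum_t' (obs Th g x t' == obs Th g x t)%:R :> R.
Proof.
rewrite /n_consistent card_set_bool -sum1_card natr_sum big_mkcond /=.
by apply: eq_bigr => t' _; rewrite unfold_in; case: (_ == _).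
Qed.

Lemma n_consistentE x t :
  (n_consistent x t)%:R = \sum_t' \1_(consistent t t') x :> R.
Proof.
rewrite n_consistent_sum; apply: eq_bigr => t' _; rewrite indicE.
suff -> : (x \in consistent t t') = (obs Th g x t' == obs Th g x t) by [].
by apply/idP/eqP; rewrite in_setE.
Qed.

Lemma measurable_n_consistent t :
  measurable_fun [set: sample] (fun x => (n_consistent x t)%:R : R).
Proof.
rewrite (funext (n_consistentE ^~ t)).
by apply: measurable_sum => t'; apply: measurable_indic; exact: measurable_consistent.
Qed.

Lemma posterior_obs x t :
  posterior Th g x (obs Th g x t) t = (n_consistent x t)%:R^-1.
Proof.
have M0 : (0 < M)%N := leq_ltn_trans (leq0n t) (ltn_ord t).
rewrite /posterior eqxx mulr1 -mulr_sumr invfM mulrA.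
by rewrite mulfV ?invr_eq0 ?pnatr_eq0 -?lt0n // mul1r n_consistent_sum.
Qed.

Lemma n_close_gt0 d t : 0 < d -> (0 < n_close d t)%N.
Proof.
move=> d0; apply/card_gt0P; exists t; rewrite in_set_bool.
by rewrite /sqdist subrr /dotv big1 // => i _; rewrite mxE mul0r.
Qed.

Lemma n_consistent_le_n_close d x t :
  Zcount Th g d x t = 0%N -> (n_consistent x t <= n_close d t)%N.
Proof.
move=> Z0; rewrite /n_consistent /n_close !card_set_bool.
apply/subset_leq_card/fintype.subsetP => t' /eqP Ex; rewrite unfold_in /= ltNge.
apply/negP => le_d; suff : (0 < Zcount Th g d x t)%N by rewrite Z0.
by apply/card_gt0P; exists t'; rewrite in_set_bool le_d andbT Ex.
Qed.

Lemma ln_n_consistent_le d x t : 0 < d ->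
  ln (n_consistent x t)%:R <=
  ln (n_close d t)%:R + ln M%:R * \1_(Zcount_pos d t) x :> R.
Proof.
move=> d0; have K0 := n_consistent_gt0 x t; have C0 := n_close_gt0 t d0.
rewrite indicE; case: (boolP (x \in _)) => [Zx | nZx].
  rewrite mulr1 -[X in X <= _]add0r; apply: lerD; first by rewrite ln_ge0 ?ler1n.
  have KM : (n_consistent x t <= M)%N by rewrite -[X in (_ <= X)%N]card_ord max_card.
  by rewrite ler_ln ?posrE ?ltr0n ?ler_nat // (leq_trans K0 KM).
rewrite /= mulr0 addr0 ler_ln ?posrE ?ltr0n // ler_nat n_consistent_le_n_close //.
by apply/eqP; rewrite -leqn0 leqNgt; apply: contra nZx; rewrite in_setE.
Qed.

Variable Q : probability sample R.

Lemma fin_num_Zcount_pos d t : Q (Zcount_pos d t) \is a fin_num.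
Proof. by apply: fin_num_measure; exact: measurable_Zcount_pos. Qed.

Lemma integral_ln_n_consistent_le d t : 0 < d ->
  (\int[Q]_x (ln (n_consistent x t)%:R)%:E <=
   (ln (n_close d t)%:R + ln M%:R * fine (Q (Zcount_pos d t)))%:E)%E.
Proof.
move=> d0; have C0 := n_close_gt0 t d0.
have M0 : (0 < M)%N := leq_ltn_trans (leq0n t) (ltn_ord t).
have mZ := measurable_Zcount_pos d t.
have lnM0 : 0 <= ln M%:R :> R by rewrite ln_ge0 // ler1n.
apply: (@le_trans _ _ (\int[Q]_x ((ln (n_close d t)%:R)%:E +
                                   (ln M%:R * \1_(Zcount_pos d t) x)%:E))%E).
  apply: ge0_le_integral => //.
  - by move=> x _; rewrite lee_fin ln_ge0 // ler1n n_consistent_gt0.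
  - apply/measurable_EFinP; apply: measurableT_comp; first exact: measurable_ln.
    exact: measurable_n_consistent.
  - apply: emeasurable_funD; first exact: measurable_cst.
    by apply/measurable_EFinP; apply: measurable_funM => //; exact: measurable_indic.
  - by move=> x _; rewrite -EFinD lee_fin ln_n_consistent_le.
rewrite ge0_integralD //; first last.
- by apply/measurable_EFinP; apply: measurable_funM => //; exact: measurable_indic.
- by move=> x _; rewrite lee_fin mulr_ge0.
- by move=> x _; rewrite lee_fin ln_ge0 // ler1n.
rewrite integral_cst // [X in (_ * X + _)%E]probability_setT mule1.
under eq_integral do rewrite EFinM.
rewrite ge0_integralZl_EFin //; last first.
  by apply/measurable_EFinP; exact: measurable_indic.
by rewrite integral_indic // setIT EFinD EFinM fineK ?fin_num_Zcount_pos.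
Qed.

Lemma cond_entropyE : cond_entropy Th g Q =
  (\sum_t (M%:R^-1)%:E * \int[Q]_x (ln (n_consistent x t)%:R)%:E)%E.
Proof.
apply: eq_bigr => t _; congr (_ * _)%E; apply: eq_integral => x _.
by rewrite posterior_obs lnV ?opprK // posrE ltr0n n_consistent_gt0.
Qed.

Lemma cond_entropy_ge0 : (0 <= cond_entropy Th g Q)%E.
Proof.
rewrite cond_entropyE; apply: sume_ge0 => t _; apply: mule_ge0.
  by rewrite lee_fin invr_ge0.
by apply: integral_ge0 => x _; rewrite lee_fin ln_ge0 // ler1n n_consistent_gt0.
Qed.

Lemma probZposE d :
  probZpos Th g Q d = (\sum_t M%:R^-1 * fine (Q (Zcount_pos d t)))%:E.
Proof.
rewrite /probZpos -sumEFin; apply: eq_bigr => t _.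
by rewrite EFinM fineK ?fin_num_Zcount_pos.
Qed.

Lemma cond_entropy_le_mean_ln_n_close d : 0 < d ->
  fine (cond_entropy Th g Q) <=
  M%:R^-1 * \sum_t ln (n_close d t)%:R + ln M%:R * fine (probZpos Th g Q d).
Proof.
move=> d0; apply: ge0_fine_le cond_entropy_ge0 _.
rewrite cond_entropyE probZposE /= !mulr_sumr -big_split -sumEFin /=.
apply: lee_sum => t _.
set q := fine _.
have -> : M%:R^-1 * ln (n_close d t)%:R + ln M%:R * (M%:R^-1 * q) =
          M%:R^-1 * (ln (n_close d t)%:R + ln M%:R * q) by ring.
rewrite EFinM; apply: lee_wpmul2l; first by rewrite lee_fin invr_ge0.
exact: integral_ln_n_consistent_le.
Qed.

Hypothesis unit_Th : forall t, dotv (Th t) (Th t) = 1.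

Lemma sum_n_close_le d : (\sum_t n_close (2 * d)%R t <=
  #|[set tt : 'I_M * 'I_M | (1 - d <= dotv (Th tt.1) (Th tt.2))%R]|)%N.
Proof.
rewrite /n_close sum_card_sections !card_set_bool.
apply/subset_leq_card/fintype.subsetP => p.
by rewrite !unfold_in /= sqdist_dotv !unit_Th => ?; lra.
Qed.

Lemma cond_entropy_le d : 0 < d -> (0 < M)%N ->
  fine (cond_entropy Th g Q) <=
  ln (M%:R * close_pair_prob Th d) + ln M%:R * fine (probZpos Th g Q (2 * d)).
Proof.
move=> d0 M0; have d20 : 0 < 2 * d by rewrite mulr_gt0.
apply: le_trans (cond_entropy_le_mean_ln_n_close d20) _; rewrite lerD2r.
have C0 t : 0 < (n_close (2 * d) t)%:R :> R by rewrite ltr0n n_close_gt0.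
have := mean_ln_le_ln_mean _ C0; rewrite card_ord => /(_ M0) /le_trans; apply.
have mean0 : 0 < M%:R^-1 * \sum_t (n_close (2 * d) t)%:R :> R.
  by rewrite mulr_gt0 ?invr_gt0 ?ltr0n ?sumr_gt0 ?card_ord.
have mean_le : M%:R^-1 * \sum_t (n_close (2 * d) t)%:R <= M%:R * close_pair_prob Th d.
  rewrite /close_pair_prob -natr_sum.
  set P := (#|_|)%:R; have -> : M%:R * (P / M%:R ^+ 2) = M%:R^-1 * P.
    by field; rewrite pnatr_eq0 -lt0n.
  by rewrite ler_wpM2l ?invr_ge0 // ler_nat sum_n_close_le.
by rewrite ler_ln ?posrE // (lt_le_trans mean0 mean_le).
Qed.

End NoiselessChannel.

Theorem proposition4 (R : realType) (Y : finType) (L M n : nat -> nat)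
  (Th : forall N, 'I_(M N) -> 'rV[R]_N)
  (g : forall N, (L N).-tuple R -> 'rV[R]_N -> Y)
  (D : forall N, probability ((L N).-tuple R) R)
  (Q : forall N, probability ((n N).-tuple ((L N).-tuple R)) R) :
  (forall N, injective (Th N)) ->
  (forall N t, dotv (Th N t) (Th N t) = 1) ->
  (forall N t t', 0 <= dotv (Th N t) (Th N t')) ->
  ((M N)%:R : R) @[N --> \oo] --> +oo ->
  (forall N t y, measurable [set x : (L N).-tuple R | g N x (Th N t) = y]) ->
  (forall N, iid_law (D N) (Q N)) ->
  assumptionA Th ->
  (forall delta : R, 0 < delta <= 2 ->
     fine (probZpos (Th N) (g N) (Q N) delta) @[N --> \oo] --> 0) ->
  (fine (cond_entropy (Th N) (g N) (Q N)) / ln (M N)%:R) @[N --> \oo] --> 0.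
Proof.
move=> _ unit_Th _ M_cvg meas_g _ [[d0 d0_gt0 [ell [ln_cvg ell_cvg]]] _] Z_cvg.
have M_ge2 : \forall N \near \oo, 2 <= ((M N)%:R : R) by exact: (cvgryPge _).1 M_cvg 2.
have M_gt0 : \forall N \near \oo, (0 < M N)%N.
  by apply: filterS M_ge2 => N M_ge2; rewrite -(ltr_nat R) (lt_le_trans _ M_ge2).
apply: (@ratio_cvg0_by_bounds R _ _
  (fun d N => ln ((M N)%:R * close_pair_prob (Th N) d))
  (fun d N => fine (probZpos (Th N) (g N) (Q N) (2 * d))) ell (Num.min d0 1)).
- by rewrite lt_min d0_gt0 ltr01.
- apply: filterS M_ge2 => N M_ge2; split; last exact/fine_ge0/cond_entropy_ge0.
  by rewrite ln_gt0 // (lt_le_trans _ M_ge2) // ltr1n.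
- by move=> d /andP [d_gt0 _]; apply: filterS M_gt0 => N; exact: cond_entropy_le.
- move=> d /andP [d_gt0 d_lt]; apply: ln_cvg.
  by rewrite d_gt0 (lt_le_trans d_lt) // ge_min lexx.
- move=> d /andP [d_gt0 d_lt]; apply: Z_cvg.
  have : d < 1 by apply: (lt_le_trans d_lt); rewrite ge_min lexx orbT.
  by rewrite mulr_gt0 //=; lra.
- exact: ell_cvg.
Qed.
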